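(* Let $m\ge 2$ be a non-prime integer and $n=2^m-1$. Then there is no monomial power permutation $F(x)=x^t$ of $GF(2^m)$ for which the self-embedding $S\cup F(S)$ lies in a closed surface, where $S=STS(\mathcal H^n)$.
   Context: A monomial power permutation is $F(x)=x^t$ with $\gcd(t,n)=1$. $S=STS(\mathcal H^n)$ is the set of 3-subsets $\{a,b,c\}$ of nonzero elements of $GF(2^m)$ with $a+b+c=0$; $F(S)=\{\{F(a),F(b),F(c)\}:\{a,b,c\}\in S\}$. For nonzero $a$, let $P_a=GF(2^m)\setminus\{0,a\}$, $s_a(y)=a+y$, $\psi_a(y)=F(F^{-1}(a)+F^{-1}(y))$; the rotation lines at $a$ are the orbits on $P_a$ of the group generated by $s_a,\psi_a$, and $rl(a)$ is their number. $S\cup F(S)$ lies in a closed surface iff $rl(a)=1$ for all nonzero $a$ (equivalently: for every nonzero $a$ and every $a_1\in P_a$, the elements $a_1,\dots,a_{2^{m-1}-1}$ with $a_{i+1}=F(F^{-1}(a)+F^{-1}(a+a_i))$ are pairwise distinct). *)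

From HB Require Import structures.
From mathcomp Require Import all_boot all_order all_algebra all_field.
Set Implicit Arguments. Unset Strict Implicit. Unset Printing Implicit Defensive.
Import GRing.Theory.
Local Open Scope ring_scope.

Section RotationLines.
Variable (K : finFieldType) (t : nat).

Definition Fmon (x : K) : K := x ^+ t.

(* Its inverse F^{-1} (a genuine inverse when F is a permutation of K). *)
Definition Finv (y : K) : K := odflt 0 [pick x : K | Fmon x == y].

Definition Pa (a : K) : {set K} := [set y : K | (y != 0) && (y != a)].

Definition s_a (a y : K) : K := a + y.

Definition psi_a (a y : K) : K := Fmon (Finv a + Finv y).

(* One-step relation of the group <s_a, psi_a> acting on P_a
   (both generators are involutions, so orbits = connected components). *)
Definition rl_step (a : K) : rel K :=
  fun x y => [&& x \in Pa a, y \in Pa a & (y == s_a a x) || (y == psi_a a x)].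

Definition rot_line (a x : K) : {set K} := [set y in Pa a | connect (rl_step a) x y].

Definition rl (a : K) : nat := #|[set rot_line a x | x in Pa a]|.

(* S ∪ F(S) lies in a closed surface iff rl(a) = 1 for every nonzero a. *)
Definition closed_surface_embedding : Prop := forall a : K, a != 0 -> rl a = 1%N.

End RotationLines.

(* Let K = GF(2^m), F(x) = x^t with gcd(t, 2^m - 1) = 1, and let d be the
   least prime divisor of m, so that 1 < d < m.  The subfield
   L = { x | x^(2^d) = x } ~ GF(2^d) contains 1 and is stable under the two
   generators s_1(y) = 1 + y and psi_1(y) = F(F^-1(1) + F^-1(y)) of the
   rotation group at a = 1: the Frobenius x |-> x^(2^d) is additive and
   commutes with every power map, hence with F and F^-1.  Every rotation line
   at 1 through a point of L therefore stays inside L.  Since L has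
   2^d >= 4 elements it meets P_1 = K \ {0, 1}, and since L is a proper
   subfield, so does its complement; hence rl(1) >= 2. *)
From HB Require Import structures.
From mathcomp Require Import all_boot all_order all_algebra all_field.
From mathcomp Require Import zify.
Set Implicit Arguments. Unset Strict Implicit. Unset Printing Implicit Defensive.
Import GRing.Theory.
Local Open Scope ring_scope.

Section FiniteFieldPowers.
Variable K : finFieldType.

Lemma expf_card_pred (x : K) : x != 0 -> x ^+ (#|K| - 1) = 1.
Proof.
move=> x0; apply: (mulIf x0); rewrite mul1r -exprSr subn1 prednK ?expf_card //.
by apply/card_gt0P; exists x.
Qed.

(* A polynomial X^n - 1 with 0 < n < #|K| - 1 cannot vanish on all of K^*:
   it has at most n roots. *)
Lemma exists_nonroot (n : nat) : (0 < n)%N -> (n < #|K| - 1)%N ->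
  exists2 x : K, x != 0 & x ^+ n != 1.
Proof.
move=> n_gt0 n_lt; apply/exists_inP; apply: contraTT n_lt.
move=> /exists_inPn all_roots; rewrite -leqNgt.
have nz_roots : all n.-unity_root (enum [pred x : K | x != 0]).
  apply/allP=> x; rewrite mem_enum inE => x0.
  by rewrite unity_rootE; have := all_roots x x0; rewrite negbK.
have := max_unity_roots n_gt0 nz_roots (enum_uniq _).
rewrite -cardE (_ : #|_| = #|K| - 1)%N // subn1 -(cardC1 (0 : K)).
by apply: eq_card => x; rewrite !inE.
Qed.

Lemma monomial_inverse_exponent (t : nat) : (0 < t)%N -> coprime t (#|K| - 1) ->
  exists u : nat, forall x : K, x ^+ (t * u) = x.
Proof.
move=> t_gt0 cop.
have [u v Bezout _] := egcdnP (#|K| - 1) t_gt0.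
exists u => x; rewrite mulnC Bezout (eqP cop) addn1 exprS mulnC exprM.
have [->|x0] := eqVneq x 0; first by rewrite mul0r.
by rewrite expf_card_pred // expr1n mulr1.
Qed.

End FiniteFieldPowers.

Section MonomialInverse.
Variables (K : finFieldType) (t u : nat).
Hypothesis tuK : forall x : K, x ^+ (t * u) = x.

Lemma Fmon_inj : injective (Fmon t : K -> K).
Proof. by move=> x y Fxy; rewrite -(tuK x) -(tuK y) !exprM -/(Fmon t x) Fxy. Qed.

Lemma Fmon_Finv (y : K) : Fmon t (Finv t y) = y.
Proof.
rewrite /Finv; case: pickP => [x /eqP // | no_preim].
by have := no_preim (y ^+ u); rewrite /Fmon -exprM mulnC tuK eqxx.
Qed.

End MonomialInverse.

Section InvariantSubset.
Variables (K : finFieldType) (t : nat) (a : K).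

Lemma connect_stable (L : pred K) x y :
  (forall z w, L z -> rl_step t a z w -> L w) ->
  L x -> connect (rl_step t a) x y -> L y.
Proof.
move=> stable Lx /connectP [p path_p ->] {y}.
elim: p x Lx path_p => //= z p IH x Lx /andP [xz path_p].
exact: IH (stable x z Lx xz) path_p.
Qed.

Lemma rl_neq1_of_stable (L : pred K) h y :
  (forall z w, L z -> rl_step t a z w -> L w) ->
  h \in Pa a -> y \in Pa a -> L h -> ~~ L y -> rl t a != 1%N.
Proof.
move=> stable hP yP Lh Ly; apply/negP => /cards1P [line lines1].
have line_of z : z \in Pa a -> rot_line t a z = line.
  by move=> zP; apply/set1P; rewrite -lines1 imset_f.
have : y \in rot_line t a h by rewrite line_of // -(line_of y) // inE yP connect0.
by rewrite inE => /andP [_ /(connect_stable stable Lh)]; apply/negP.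
Qed.

End InvariantSubset.

Section FrobeniusFixed.
Variables (K : finFieldType) (p d t u : nat).
Hypothesis charK : (p \in [pchar K])%N.
Hypothesis tuK : forall x : K, x ^+ (t * u) = x.

Definition frob_fixed (x : K) : bool := x ^+ (p ^ d) == x.

(* Additivity comes from the Frobenius being a ring morphism. *)
Lemma frob_fixedD x y : frob_fixed x -> frob_fixed y -> frob_fixed (x + y).
Proof.
rewrite /frob_fixed exprDn_pchar => [/eqP -> /eqP -> //|].
by rewrite (eq_pnat _ (pcharf_eq charK)) pnatX pnat_id ?(pcharf_prime charK).
Qed.

Lemma frob_fixed1 : frob_fixed 1.
Proof. by rewrite /frob_fixed expr1n. Qed.

Lemma frob_fixedX x n : frob_fixed x -> frob_fixed (x ^+ n).
Proof. by rewrite /frob_fixed -exprM mulnC exprM => /eqP ->. Qed.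

Lemma frob_fixed_unit x : x != 0 -> frob_fixed x = (x ^+ (p ^ d - 1) == 1).
Proof.
move=> x0; have pd_gt0 : (0 < p ^ d)%N.
  by rewrite expn_gt0 prime_gt0 ?(pcharf_prime charK).
rewrite /frob_fixed -{1}(subnK pd_gt0) addn1 exprSr.
by rewrite -[X in _ == X]mul1r (inj_eq (mulIf x0)).
Qed.

(* If p^d - 1 is a proper divisor of #|K| - 1 and p^d > 2, the fixed subfield
   has a point outside {0, 1} (a (#|K| - 1)/(p^d - 1)-th power), and K has a
   point outside {0, 1} that is not fixed (a non-(p^d - 1)-th root of 1). *)
Lemma fixed_and_unfixed_points :
  (2 < p ^ d)%N -> (p ^ d < #|K|)%N -> (p ^ d - 1 %| #|K| - 1)%N ->
  exists h y : K, [/\ h \in Pa 1, y \in Pa 1, frob_fixed h & ~~ frob_fixed y].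
Proof.
move=> pd_gt2 pd_lt /dvdnP [k kq].
have [x x0 xk] : exists2 x : K, x != 0 & x ^+ k != 1.
  by apply: exists_nonroot; nia.
have [y y0 yq] : exists2 y : K, y != 0 & y ^+ (p ^ d - 1) != 1.
  by apply: exists_nonroot; lia.
have Fy : ~~ frob_fixed y by rewrite frob_fixed_unit.
exists (x ^+ k), y; split; rewrite ?inE ?expf_neq0 ?y0 //.
- by apply: contraNneq Fy => ->; apply: frob_fixed1.
- by rewrite frob_fixed_unit ?expf_neq0 // -exprM -kq expf_card_pred.
Qed.

(* F^{-1} commutes with the Frobenius since F does and F is injective. *)
Lemma frob_fixed_Finv y : frob_fixed y -> frob_fixed (Finv t y).
Proof.
move=> Fy; apply/eqP/(Fmon_inj tuK).
by rewrite [LHS]/Fmon -exprM mulnC exprM -/(Fmon t _) (Fmon_Finv tuK); apply/eqP.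
Qed.

Lemma frob_fixed_step a : frob_fixed a ->
  forall x y, frob_fixed x -> rl_step t a x y -> frob_fixed y.
Proof.
move=> Fa x y Fx /and3P [_ _ /orP [] /eqP ->]; first exact: frob_fixedD.
by apply/frob_fixedX/frob_fixedD; apply: frob_fixed_Finv.
Qed.

End FrobeniusFixed.

Lemma proper_prime_divisor m : (2 <= m)%N -> ~~ prime m ->
  exists d : nat, [/\ prime d, (d %| m)%N & (d < m)%N].
Proof.
move=> m2 not_prime; exists (pdiv m); split; first by apply: pdiv_prime.
  exact: pdiv_dvd.
rewrite ltn_neqAle dvdn_leq ?pdiv_dvd 1?ltnW // andbT.
by apply: contraNneq not_prime => <-; apply: pdiv_prime.
Qed.

Lemma mersenne_dvd d m : (d %| m)%N -> (2 ^ d - 1 %| 2 ^ m - 1)%N.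
Proof.
by move=> /dvdnP [k ->]; rewrite !subn1 mulnC expnM dvdn_pred_predX.
Qed.

Theorem mainTheorem8 (m : nat) (K : finFieldType) :
  (2 <= m)%N -> ~~ prime m -> #|K| = (2 ^ m)%N ->
  forall t : nat, coprime t (2 ^ m - 1) ->
  ~ closed_surface_embedding K t.
Proof.
move=> m2 not_prime cardK t cop closed.
have m_big : (2 ^ 2 <= 2 ^ m)%N by rewrite leq_exp2l.
have t_gt0 : (0 < t)%N.
  by rewrite lt0n; apply: contraTneq cop => ->; rewrite /coprime gcd0n; lia.
have [u tuK] : exists u : nat, forall x : K, x ^+ (t * u) = x.
  by apply: monomial_inverse_exponent; rewrite ?cardK.
have charK : (2 \in [pchar K])%N by apply: (card_finPcharP cardK).
have [d [d_prime d_dvd d_lt]] := proper_prime_divisor m2 not_prime.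
have [h [y [hP yP Fh Fy]]] : exists h y : K,
    [/\ h \in Pa 1, y \in Pa 1, frob_fixed 2 d h & ~~ frob_fixed 2 d y].
  apply: fixed_and_unfixed_points charK _ _ _; rewrite ?cardK ?mersenne_dvd //.
  - suff : (2 ^ 2 <= 2 ^ d)%N by lia.
    by rewrite leq_exp2l ?prime_gt1.
  - by rewrite ltn_exp2l.
have stable := frob_fixed_step charK tuK (frob_fixed1 K 2 d).
have := rl_neq1_of_stable stable hP yP Fh Fy.
by rewrite closed ?oner_neq0.
Qed.
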